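(* For $p=(\alpha_1,\dots,\alpha_n)\in\mathbb{C}^n$, let $M_p=(x_1-\alpha_1)A+\dots+(x_n-\alpha_n)A$ and, for $1\le i\le n-2$, let $g_i=t_i(p)\,s_i-s_i(p)\,t_i\in A$. Then $M_p$ is a Poisson ideal of $A$ if and only if one of the following holds: (1) $p$ is a common zero of $s_i$ and $t_i$ for some $i$; (2) $g_1,\dots,g_{n-2}$ are algebraically dependent over $\mathbb{C}$; (3) $p$ is a singular point of the affine variety determined by $g_1,\dots,g_{n-2}$.
   Context: Let $n\ge 3$, $A=\mathbb{C}[x_1,\dots,x_n]$. Fix $s_1,t_1,\dots,s_{n-2},t_{n-2}\in A$ with each $t_i\ne 0$ and $s_i,t_i$ coprime, such that $s_1/t_1,\dots,s_{n-2}/t_{n-2}$ are algebraically independent over $\mathbb{C}$. $A$ carries the Poisson bracket $\{f,g\}=(t_1\cdots t_{n-2})^2\,\mathrm{Jac}(f,g,s_1/t_1,\dots,s_{n-2}/t_{n-2})$ ($\mathrm{Jac}$ = Jacobian determinant with respect to $x_1,\dots,x_n$). An ideal $I$ is a Poisson ideal if $\{I,A\}\subseteq I$. Note $g_i(p)=0$ for all $i$. In (3), the affine variety $\mathcal{V}(g_1,\dots,g_{n-2})$ is the one defined by the ideal generated by $g_1,\dots,g_{n-2}$ (of dimension $2$ when these are algebraically independent), and singularity is in the sense of the general Jacobian criterion for these generators: $p$ is singular iff the $(n-2)\times n$ matrix $\big(\partial g_i/\partial x_j(p)\big)$ has rank less than $n-2$. *)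

From HB Require Import structures.
From mathcomp Require Import all_boot all_order all_algebra.
From mathcomp Require Import reals.
From mathcomp Require Import complex.
From mathcomp Require Import mpoly.
Set Implicit Arguments. Unset Strict Implicit. Unset Printing Implicit Defensive.
Import Order.TTheory GRing.Theory Num.Theory.
Local Open Scope ring_scope.

Notation "x %:F" := (@FracField.tofrac _ x) : ring_scope.

Section PoissonDefs.
Variables (R : realType) (n : nat).
Local Notation C := (complex R).
Local Notation A := {mpoly C[n]}.
Local Notation K := {fraction A}.

Definition mdvd (d f : A) : Prop := exists q : A, f = d * q.
Definition mcoprime (f g : A) : Prop :=
  forall d : A, mdvd d f -> mdvd d g -> d \is a GRing.unit.

Definition pderiv_frac (s t : A) (j : 'I_n) : K :=
  (t * s^`M(j) - s * t^`M(j))%:F / (t ^+ 2)%:F.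

(* Jacobian matrix of (f, g, s_1/t_1, ..., s_{n-2}/t_{n-2}) w.r.t. x_1..x_n;
   row 0 = f, row 1 = g, row k+2 = s_(k)/t_(k) (indices of s,t start at 0). *)
Definition jac_matrix (s t : nat -> A) (f g : A) : 'M[K]_n :=
  \matrix_(i < n, j < n)
    if val i == 0%N then (f^`M(j))%:F
    else if val i == 1%N then (g^`M(j))%:F
    else pderiv_frac (s (val i - 2)%N) (t (val i - 2)%N) j.

Definition pbracket (s t : nat -> A) (f g : A) : K :=
  (\prod_(i < n - 2) (t i)%:F) ^+ 2 * \det (jac_matrix s t f g).

(* I is a Poisson ideal : {I, A} is contained in I (the bracket lands in A) *)
Definition poisson_ideal (s t : nat -> A) (I : A -> Prop) : Prop :=
  forall a b : A, I a -> exists c : A, I c /\ c%:F = pbracket s t a b.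

Definition maxideal (p : 'I_n -> C) (f : A) : Prop :=
  exists a : 'I_n -> A, f = \sum_(i < n) ('X_i - (p i)%:MP) * a i.

(* algebraic dependence over C of a family v : 'I_k -> S, where the
   C-algebra structure of S is given by the ring morphism emb : C -> S *)
Definition alg_dependent (S : ringType) (emb : C -> S) (k : nat)
    (v : 'I_k -> S) : Prop :=
  exists P : {mpoly C[k]}, P != 0 /\ mmap emb v P = 0.

Definition gpoly (s t : nat -> A) (p : 'I_n -> C) (i : nat) : A :=
  (t i).@[p] *: s i - (s i).@[p] *: t i.

(* p is a singular point of V(g_1,...,g_{n-2}) (Jacobian criterion) *)
Definition singular_point (g : nat -> A) (p : 'I_n -> C) : Prop :=
  (\rank (\matrix_(i < n - 2, j < n) ((g i)^`M(j)).@[p]) < n - 2)%N.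

End PoissonDefs.

From HB Require Import structures.
From mathcomp Require Import all_boot all_order all_algebra.
From mathcomp Require Import reals complex mpoly.
From mathcomp Require Import zify ring.
Set Implicit Arguments. Unset Strict Implicit. Unset Printing Implicit Defensive.
Import Order.TTheory GRing.Theory Num.Theory.
Local Open Scope ring_scope.

(* At p the matrix defining {f, g} has rows grad f(p), grad g(p) and
   t_i(p) grad s_i(p) - s_i(p) grad t_i(p) = grad g_i(p).  Bracketing the
   generators x_j - p_j and x_l of M_p, all these bordered determinants vanish
   iff the Jacobian matrix of g_1, ..., g_(n-2) at p is not of full rank, i.e.
   iff (3) holds, and then every bracket of M_p lies in M_p.  Condition (1)
   makes some g_i zero, hence implies (2). *)

Section MPolyRingInd.
Variables (R : ringType) (n : nat) (P : {mpoly R[n]} -> Prop).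

Lemma mpoly_ring_ind :
  (forall c, P c%:MP) -> (forall i, P 'X_i) ->
  (forall f g, P f -> P g -> P (f + g)) -> (forall f g, P f -> P g -> P (f * g)) ->
  forall f, P f.
Proof.
move=> PC PX PD PM.
have PXm m : P 'X_[m].
  rewrite mpolyXE_id; apply: (big_ind P) => // [|i _]; first by rewrite -mpolyC1.
  elim: (m i) => [|e IH]; first by rewrite expr0 -mpolyC1.
  by rewrite exprS; apply: PM.
elim/mpolyind => [|c m f _ _ Pf]; first by rewrite -mpolyC0.
by rewrite -mul_mpolyC; apply: PD => //; apply: PM.
Qed.

End MPolyRingInd.

Lemma mderivXU (R : ringType) n (i j : 'I_n) :
  ('X_i : {mpoly R[n]})^`M(j) = ((i == j)%:R)%:MP.
Proof.
rewrite mderivX mnm1E; case: eqP => [->|_]; last by rewrite scale0r mpolyC0.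
by rewrite -{1}[U_(j)%MM]add0m addmK mpolyX0 scale1r mpolyC1.
Qed.

Definition mgrad (R : comRingType) n (f : {mpoly R[n]}) (p : 'I_n -> R) : 'rV[R]_n :=
  \row_j (f^`M(j)).@[p].

Lemma mgradXsubC (R : comRingType) n (j : 'I_n) (c : R) p :
  mgrad ('X_j - c%:MP) p = delta_mx 0 j.
Proof.
by apply/rowP => l; rewrite !mxE mderivB mderivC subr0 mderivXU mevalC eq_sym.
Qed.

Section Jacobian.
Variables (R : comRingType) (n m : nat) (g : 'I_m -> {mpoly R[n]}).
Local Notation mcomp P := (mmap (fun c : R => c%:MP) g P).

Definition jacobian : 'M[{mpoly R[n]}]_(m, n) := \matrix_(i, j) (g i)^`M(j).

Lemma mderiv_mmap (P : {mpoly R[m]}) j :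
  (mcomp P)^`M(j) = \sum_(i < m) mcomp (P^`M(i)) * (g i)^`M(j).
Proof.
elim/mpoly_ring_ind: P => [c|i|P Q hP hQ|P Q hP hQ].
- by rewrite mmapC mderivC big1 // => i _; rewrite mderivC mmap0 mul0r.
- rewrite mmapX mmap1U (bigD1 i) //= big1 ?addr0 => [|l /negbTE li].
    by rewrite mderivXU eqxx mmapC mul1r.
  by rewrite mderivXU eq_sym li mmapC mul0r.
- rewrite mmapD mderivD hP hQ -big_split; apply: eq_bigr => i _.
  by rewrite mderivD mmapD mulrDl.
rewrite rmorphM mderivM hP hQ mulr_suml mulr_sumr -big_split; apply: eq_bigr => i _.
by rewrite mderivM mmapD !rmorphM mulrDl mulrAC mulrA.
Qed.

End Jacobian.

Section CharZero.
Variables (R : numDomainType) (m : nat).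
Implicit Types P : {mpoly R[m]}.

Lemma msize_mderiv_lt P i : P^`M(i) != 0 -> (msize (P^`M(i)) < msize P)%N.
Proof.
move=> dP_neq0.
have lt_supp mo : mo \in msupp (P^`M(i)) -> ((mdeg mo).+2 <= msize P)%N.
  rewrite mcoeff_msupp mcoeff_deriv => c_neq0.
  have : (mo + U_(i))%MM \in msupp P.
    by rewrite mcoeff_msupp; apply: contra c_neq0 => /eqP ->; rewrite mul0rn.
  by move/msize_mdeg_lt; rewrite mdegD mdeg1 addn1.
have [mo mo_in] : exists mo, mo \in msupp (P^`M(i)).
  case E : (msupp (P^`M(i))) => [|mo sP]; last by exists mo; rewrite mem_head.
  by move: dP_neq0; rewrite -msupp_eq0 E.
have : (msize (P^`M(i)) <= (msize P).-1)%N.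
  by rewrite [msize _]msizeE; apply/bigmax_leqP_seq => mo' /lt_supp; lia.
by have := lt_supp _ mo_in; lia.
Qed.

Lemma mderiv_eq0_mpolyC P : (forall i, P^`M(i) = 0) -> P = (P@_0)%:MP.
Proof.
move=> dP0; apply/mpolyP => mo; rewrite mcoeffC.
have [->|mo_neq0] := eqVneq mo 0%MM; first by rewrite mulr1.
rewrite mulr0; have [i mo_i_gt0] : exists i, (0 < mo i)%N.
  apply/existsP; apply: contraNT mo_neq0 => /existsPn mo0.
  by apply/eqP/mnmP => i; rewrite mnm0E; have := mo0 i; case: (mo i).
have U_le_mo : (U_(i) <= mo)%MM.
  by apply/mnm_lepP => l; rewrite mnm1E; case: eqP => [<-|].
have := mcoeff_deriv i (mo - U_(i)) P; rewrite submK // dP0 mcoeff0 => /esym/eqP.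
by rewrite mulrn_eq0 /= => /eqP.
Qed.

End CharZero.

Section AlgebraicRelation.
Variables (R : numDomainType) (n m : nat) (g : 'I_m -> {mpoly R[n]}).
Local Notation mcomp P := (mmap (fun c : R => c%:MP) g P).

Lemma alg_relation_jacobian_kernel (P : {mpoly R[m]}) :
  P != 0 -> mcomp P = 0 -> exists2 v : 'rV_m, v != 0 & v *m jacobian g = 0.
Proof.
have [N] := ubnP (msize P); elim: N P => // N IH P sizeP P_neq0 gP0.
pose v : 'rV_m := \row_i mcomp (P^`M(i)).
have [v0|v_neq0] := eqVneq v 0; last first.
  exists v => //; apply/rowP => j; rewrite !mxE.
  transitivity ((mcomp P)^`M(j)); last by rewrite gP0 mderiv0.
  by rewrite mderiv_mmap; apply: eq_bigr => i _; rewrite !mxE.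
have gdP0 i : mcomp (P^`M(i)) = 0 by move/rowP/(_ i): v0; rewrite !mxE.
have [i dP_neq0|dP0] := pickP (fun i => P^`M(i) != 0).
  by apply: (IH (P^`M(i))) => //; apply: leq_trans (msize_mderiv_lt dP_neq0) _.
have P_const : P = (P@_0)%:MP by apply: mderiv_eq0_mpolyC => i; apply/eqP/negbFE/dP0.
move: gP0 P_neq0; rewrite P_const mmapC => /eqP.
by rewrite !mpolyC_eq0 => ->.
Qed.

End AlgebraicRelation.

Lemma left_kernel_meval_not_row_free (R : fieldType) n m N
    (M : 'M[{mpoly R[n]}]_(m, N)) (v : 'rV_m) (p : 'I_n -> R) :
  v != 0 -> v *m M = 0 -> ~~ row_free (map_mx (meval p) M).
Proof.
move=> v_neq0 vM0; apply/negP => /row_freeP[B MB1].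
(* lifting B to constant polynomials gives Q with Q(p) = 1 but v Q = 0 *)
pose Q := M *m map_mx (fun c : R => c%:MP_[n]) B.
have detQ0 : \det Q = 0 by apply/eqP/det0P; exists v; rewrite // mulmxA vM0 mul0mx.
have : map_mx (meval p) Q = 1%:M.
  rewrite map_mxM -MB1 -map_mx_comp; congr (_ *m _).
  by apply/matrixP => i j; rewrite !mxE /= mevalC.
move/(congr1 determinant); rewrite det_map_mx detQ0 rmorph0 det1 => /eqP.
by rewrite eq_sym oner_eq0.
Qed.

Section RowFreeBordering.
Variable F : fieldType.

Lemma mxrank_col_mx_leq m1 m2 N (A : 'M[F]_(m1, N)) (B : 'M[F]_(m2, N)) :
  (\rank (col_mx A B) <= \rank A + \rank B)%N.
Proof. by rewrite -addsmxE; case: (mxrank_adds_leqif A B). Qed.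

Lemma mxrank_col_mx_delta_gt r N (B : 'M[F]_(r, N)) : (\rank B < N)%N ->
  exists j : 'I_N, (\rank B < \rank (col_mx (delta_mx 0%R j : 'rV_N) B))%N.
Proof.
move=> rkB.
have [j ej_notin|ej_in] := pickP (fun j => ~~ ((delta_mx 0%R j : 'rV_N) <= B)%MS).
  exists j; apply: rank_ltmx.
  by rewrite ltmxE -addsmxE addsmxSr col_mx_sub (negbTE ej_notin).
have : (1%:M <= B)%MS by apply/row_subP => i; rewrite row1; apply/negbFE/ej_in.
by move/mxrankS; rewrite mxrank1 leqNgt rkB.
Qed.

Lemma row_free_det_col_mx_delta m (G : 'M[F]_(m, m.+2)) : row_free G ->
  exists j k, \det (col_mx (delta_mx 0%R j : 'rV_m.+2)
                  (col_mx (delta_mx 0%R k : 'rV_m.+2) G)) != 0.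
Proof.
move=> /eqP rkG.
have [|k rkGk] := @mxrank_col_mx_delta_gt _ _ G; first by rewrite rkG.
rewrite rkG in rkGk.
set B := col_mx _ G in rkGk.
have [j rkBj] : exists j, (\rank B < \rank (col_mx (delta_mx 0%R j : 'rV_m.+2) B))%N.
  by apply: mxrank_col_mx_delta_gt; rewrite ltnS (leq_trans (rank_leq_row B)).
exists j, k; rewrite -unitfE -unitmxE -row_full_unit /row_full eqn_leq rank_leq_col.
by apply: leq_trans rkBj.
Qed.

Lemma det_col_mx2_not_row_free m (G : 'M[F]_(m, m.+2)) (u v : 'rV_m.+2) :
  ~~ row_free G -> \det (col_mx u (col_mx v G)) = 0.
Proof.
move=> G_not_free; apply/eqP; apply: contraNT G_not_free.
rewrite -unitfE -unitmxE -row_full_unit /row_free => /eqP rk_full.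
have := mxrank_col_mx_leq u (col_mx v G); have := mxrank_col_mx_leq v G.
have := rank_leq_row u; have := rank_leq_row v; have := rank_leq_row G.
rewrite rk_full; lia.
Qed.

End RowFreeBordering.

Section MaxIdeal.
Variables (R : realType) (n : nat) (p : 'I_n -> complex R).
Local Notation A := {mpoly (complex R)[n]}.

Lemma maxideal_meval (f : A) : maxideal p f -> f.@[p] = 0.
Proof.
case=> a ->; rewrite rmorph_sum /= big1 // => i _.
by rewrite mevalM mevalB mevalXU mevalC subrr mul0r.
Qed.

Lemma maxideal0 : maxideal p 0.
Proof. by exists (fun=> 0); rewrite big1 // => i _; rewrite mulr0. Qed.

Lemma maxidealD f g : maxideal p f -> maxideal p g -> maxideal p (f + g).
Proof.
case=> a -> [b ->]; exists (fun i => a i + b i).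
by rewrite -big_split; apply: eq_bigr => i _; rewrite mulrDr.
Qed.

Lemma maxidealMr f g : maxideal p f -> maxideal p (f * g).
Proof.
case=> a ->; exists (fun i => a i * g).
by rewrite mulr_suml; apply: eq_bigr => i _; rewrite mulrA.
Qed.

Lemma maxidealXsubC j : maxideal p ('X_j - (p j)%:MP).
Proof.
exists (fun i => (i == j)%:R); rewrite (bigD1 j) //= eqxx mulr1 big1 ?addr0 //.
by move=> i /negbTE ->; rewrite mulr0.
Qed.

Lemma maxidealP (f : A) : maxideal p f <-> f.@[p] = 0.
Proof.
split; first exact: maxideal_meval.
suff shift : maxideal p (f - (f.@[p])%:MP) by move=> fp0; rewrite fp0 subr0 in shift.
elim/mpoly_ring_ind: f => [c|j|f g hf hg|f g hf hg].
- by rewrite mevalC subrr; apply: maxideal0.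
- by rewrite mevalXU; apply: maxidealXsubC.
- by rewrite mevalD raddfD opprD addrACA; apply: maxidealD.
have -> : f * g - ((f * g).@[p])%:MP =
    (f - (f.@[p])%:MP) * g + (g - (g.@[p])%:MP) * (f.@[p])%:MP.
  by rewrite mevalM rmorphM; ring.
by apply: maxidealD; apply: maxidealMr.
Qed.

End MaxIdeal.

Lemma alg_dependent_has0 (R : realType) n m (v : 'I_m -> {mpoly (complex R)[n]}) i :
  v i = 0 -> alg_dependent (fun c : complex R => c%:MP_[n]) v.
Proof.
move=> vi0; exists 'X_i; split; last by rewrite mmapX mmap1U.
by apply/eqP => /(congr1 (meval (fun=> 1))); rewrite mevalXU meval0 => /eqP; rewrite oner_eq0.
Qed.

Section PoissonMaxIdeal.
Variables (R : realType) (k : nat) (s t : nat -> {mpoly (complex R)[k.+3]}).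
Local Notation n := k.+3.
Local Notation C := (complex R).
Local Notation A := {mpoly C[n]}.

Definition quot_numer (i : nat) (j : 'I_n) : A := t i * (s i)^`M(j) - s i * (t i)^`M(j).

Definition bracket_matrix (f g : A) : 'M[A]_n :=
  \matrix_(i, j) if i == 0 :> nat then f^`M(j) else if i == 1 :> nat then g^`M(j)
                 else quot_numer (i - 2) j.

Definition gjacobian (p : 'I_n -> C) : 'M[A]_(k.+1, n) :=
  jacobian (fun i : 'I_k.+1 => gpoly s t p i).
Local Notation gjac_at p := (map_mx (meval p) (gjacobian p)).

Lemma pbracketE (f g : A) : (forall i, (i < k.+1)%N -> t i != 0) ->
  pbracket s t f g = (\det (bracket_matrix f g))%:F.
Proof.
move=> t_neq0.
pose d : 'rV[{fraction A}]_n := \row_i if (val i < 2)%N then 1 else (t (val i - 2))%:F ^+ 2.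
have scale_rows : map_mx (@FracField.tofrac _) (bracket_matrix f g) =
    diag_mx d *m jac_matrix s t f g.
  apply/matrixP => i j; rewrite mul_diag_mx !mxE.
  (* row i + 2 of jac_matrix is the quotient rule for s_i/t_i *)
  case: i => [[|[|i]] lt_i] /=; rewrite ?mul1r // !subSS subn0.
  rewrite /quot_numer /pderiv_frac tofracXn [RHS]mulrC divfK //.
  by rewrite expf_neq0 // tofrac_eq0 t_neq0.
rewrite /pbracket -det_map_mx scale_rows det_mulmx det_diag -prodrXl.
congr (_ * _); rewrite [RHS]big_ord_recl big_ord_recl !mxE /= !mul1r.
apply: eq_bigr => i _; rewrite !mxE /=.
by have -> : (bump 0 (bump 0 i) - 2 = i)%N by rewrite /bump !leq0n /=; lia.
Qed.

Lemma meval_quot_numer p i j :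
  (quot_numer i j).@[p] = ((gpoly s t p i)^`M(j)).@[p].
Proof. by rewrite mderivB !mderivZ !mevalB !mevalZ !mevalM. Qed.

Lemma meval_bracket_matrix p (f g : A) :
  map_mx (meval p) (bracket_matrix f g) =
  col_mx (mgrad f p) (col_mx (mgrad g p) (map_mx (meval p) (gjacobian p))).
Proof.
apply/matrixP => i j; rewrite !mxE.
case: splitP => [i0 ->|i' ->]; first by rewrite ord1 !mxE.
rewrite mxE; case: splitP => [i1 ->|i2 ->]; first by rewrite ord1 !mxE.
rewrite !mxE /= -meval_quot_numer.
by have -> : (1 + (1 + i2) - 2 = i2)%N by lia.
Qed.

Lemma poisson_maxideal_iff p : (forall i, (i < k.+1)%N -> t i != 0) ->
  poisson_ideal s t (maxideal p) <-> ~~ row_free (gjac_at p).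
Proof.
move=> t_neq0; split => [poisson|not_free a b Ma].
  apply/negP => /row_free_det_col_mx_delta[j [l det_neq0]].
  have [c [Mc c_def]] := poisson _ ('X_l - 0%:MP) (maxidealXsubC p j).
  move/eqP: c_def; rewrite pbracketE // tofrac_eq => /eqP c_def.
  move: det_neq0; rewrite -(mgradXsubC j (p j) p) -(mgradXsubC l 0 p).
  by rewrite -meval_bracket_matrix det_map_mx -c_def /= (maxideal_meval Mc) eqxx.
exists (\det (bracket_matrix a b)); split; last by rewrite pbracketE.
by apply/maxidealP; rewrite -det_map_mx meval_bracket_matrix det_col_mx2_not_row_free.
Qed.

Lemma singular_pointE p : singular_point (gpoly s t p) p <-> ~~ row_free (gjac_at p).
Proof.
rewrite /singular_point /row_free.
have -> : \matrix_(i < n - 2, j < n) ((gpoly s t p i)^`M(j)).@[p] = gjac_at p.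
  by apply/matrixP => i j; rewrite !mxE.
by rewrite ltn_neqAle rank_leq_row andbT.
Qed.

Lemma alg_dependent_gpoly_not_row_free p :
  alg_dependent (fun c : C => c%:MP_[n]) (fun i : 'I_k.+1 => gpoly s t p i) ->
  ~~ row_free (gjac_at p).
Proof.
case=> P [P_neq0 gP0]; have [v v_neq0 vJ] := alg_relation_jacobian_kernel P_neq0 gP0.
exact: left_kernel_meval_not_row_free v_neq0 vJ.
Qed.

End PoissonMaxIdeal.

Theorem lemma3p2 (R : realType) (n : nat)
    (s t : nat -> {mpoly (complex R)[n]}) :
  (3 <= n)%N ->
  (forall i, (i < n - 2)%N -> t i != 0) ->
  (forall i, (i < n - 2)%N -> mcoprime (s i) (t i)) ->
  ~ alg_dependent (fun c : complex R => (c%:MP_[n])%:F)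
      (fun i : 'I_(n - 2) => (s i)%:F / (t i)%:F) ->
  forall p : 'I_n -> complex R,
    poisson_ideal s t (maxideal p) <->
    [\/ exists i, (i < n - 2)%N /\ (s i).@[p] = 0 /\ (t i).@[p] = 0,
        alg_dependent (fun c : complex R => c%:MP_[n])
          (fun i : 'I_(n - 2) => gpoly s t p i)
      | singular_point (gpoly s t p) p].
Proof.
move=> n_ge3; have [k n_def] : exists k, n = k.+3 by exists (n - 3)%N; lia.
subst n => t_neq0 _ _ p.
have poissonE := poisson_maxideal_iff s p t_neq0; have singularE := singular_pointE s t p.
split => [/poissonE/singularE|conds]; first exact: Or33.
apply/poissonE; case: conds => [[i [lt_i [si0 ti0]]]|dep|/singularE //].
  apply/alg_dependent_gpoly_not_row_free/(@alg_dependent_has0 _ _ _ _ (Ordinal lt_i)).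
  by rewrite /gpoly si0 ti0 !scale0r subrr.
exact: alg_dependent_gpoly_not_row_free.
Qed.
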